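(* Let $P$ be a convex point set in the plane and let $\vec d_1$ be a directed straight line not orthogonal to any line through two points of $P$. Then there exists a directed straight line $\vec d_2$, not orthogonal to any line through two points of $P$ and such that the clockwise rotation bringing $\vec d_1$ to coincide with $\vec d_2$ is at most $180^\circ$, for which the $(\vec d_1,\vec d_2)$-partition of $P$ is balanced.
   Context: A convex point set is a finite point set in the plane in which no point is a convex combination of the others; $\mathcal H_P$ denotes its convex hull. For a directed line $\vec d$ not orthogonal to any line through two points of $P$, order the points of $P$ by their orthogonal projections on $\vec d$; let $p_a(\vec d)$ and $p_b(\vec d)$ be the first (minimum) and last (maximum) point. Let $P_1(\vec d)$ be the set of points of $P$ encountered when walking clockwise along the boundary of $\mathcal H_P$ from $p_a(\vec d)$ to $p_b(\vec d)$, including $p_a(\vec d)$ and excluding $p_b(\vec d)$; let $P_2(\vec d)$ be the set of points encountered walking clockwise from $p_b(\vec d)$ to $p_a(\vec d)$, including $p_b(\vec d)$ and excluding $p_a(\vec d)$. For two such directed lines $\vec d_1,\vec d_2$ with the clockwise rotation bringing $\vec d_1$ to $\vec d_2$ at most $180^\circ$, the $(\vec d_1,\vec d_2)$-partition of $P$ consists of $P_a=P_1(\vec d_1)\cap P_1(\vec d_2)$, $P_b=P_1(\vec d_1)\cap P_2(\vec d_2)$, $P_c=P_2(\vec d_1)\cap P_1(\vec d_2)$, $P_d=P_2(\vec d_1)\cap P_2(\vec d_2)$. It is balanced if $|P_a|+|P_d|\le \frac{|P|}{2}+1$ and $|P_b|+|P_c|\le\frac{|P|}{2}+1$. *)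

From HB Require Import structures.
From mathcomp Require Import all_boot all_order all_algebra.
From mathcomp Require Import all_classical all_reals all_analysis.
Set Implicit Arguments. Unset Strict Implicit. Unset Printing Implicit Defensive.
Import Order.TTheory GRing.Theory Num.Theory.
Local Open Scope ring_scope.

(* Points of the plane and directions are pairs (x, y) : R * R,
   with the usual orientation (x to the right, y upward). *)

Section Defs.
Variable R : realType.
Notation pt := (R * R)%type.

Definition dotp (u v : pt) : R := u.1 * v.1 + u.2 * v.2.
Definition subp (u v : pt) : pt := (u.1 - v.1, u.2 - v.2).
(* orientation of (p, q, r): > 0 iff r is strictly left of the directed line p -> q *)
Definition orient (p q r : pt) : R :=
  (q.1 - p.1) * (r.2 - p.2) - (q.2 - p.2) * (r.1 - p.1).

Definition convex_point_set (P : seq pt) : Prop :=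
  uniq P /\
  forall p, p \in P -> ~ exists w : pt -> R,
     (forall q, 0 <= w q) /\
     \sum_(q <- P | q != p) w q = 1 /\
     \sum_(q <- P | q != p) w q * q.1 = p.1 /\
     \sum_(q <- P | q != p) w q * q.2 = p.2.

(* A directed line is represented by its (nonzero) direction vector d;
   its position is irrelevant for orthogonal projections order.
   It is not orthogonal to any line through two points of P. *)
Definition generic_dir (P : seq pt) (d : pt) : Prop :=
  d != (0, 0) /\
  forall p q, p \in P -> q \in P -> p != q -> dotp d (subp q p) != 0.

Definition minpt (d : pt) (P : seq pt) : pt :=
  if P is x :: P' then
    foldl (fun m y => if dotp d y < dotp d m then y else m) x P'
  else (0, 0).
Definition maxpt (d : pt) (P : seq pt) : pt :=
  if P is x :: P' then
    foldl (fun m y => if dotp d m < dotp d y then y else m) x P'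
  else (0, 0).

(* s lists the vertices of the convex hull of P in clockwise order:
   s is a permutation of P and for every (cyclically) consecutive pair
   (s_i, s_{i+1}) all other points lie strictly to the right of the
   directed segment s_i -> s_{i+1} (i.e. it is a hull edge traversed
   with the interior on its right). *)
Definition cw_boundary (P s : seq pt) : Prop :=
  perm_eq s P /\
  forall i, (i < size s)%N ->
    forall x, x \in s -> x != nth (0, 0) s i ->
      x != nth (0, 0) s (i.+1 %% size s) ->
      orient (nth (0, 0) s i) (nth (0, 0) s (i.+1 %% size s)) x < 0.

(* points met walking along s (cyclically) from a (included) to b (excluded) *)
Definition arc (s : seq pt) (a b : pt) : seq pt :=
  let s' := rot (index a s) s in take (index b s') s'.

Definition P1 (s : seq pt) (d : pt) : seq pt := arc s (minpt d s) (maxpt d s).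
Definition P2 (s : seq pt) (d : pt) : seq pt := arc s (maxpt d s) (minpt d s).

Definition cw_rotation_le_pi (d1 d2 : pt) : Prop :=
  exists theta : R, 0 <= theta <= pi /\
    exists k : R, 0 < k /\
      d2 = (k * (d1.1 * cos theta + d1.2 * sin theta),
            k * (- d1.1 * sin theta + d1.2 * cos theta)).

Definition part_a (P s : seq pt) d1 d2 := [seq x <- P | (x \in P1 s d1) && (x \in P1 s d2)].
Definition part_b (P s : seq pt) d1 d2 := [seq x <- P | (x \in P1 s d1) && (x \in P2 s d2)].
Definition part_c (P s : seq pt) d1 d2 := [seq x <- P | (x \in P2 s d1) && (x \in P1 s d2)].
Definition part_d (P s : seq pt) d1 d2 := [seq x <- P | (x \in P2 s d1) && (x \in P2 s d2)].

Definition balanced (P s : seq pt) (d1 d2 : pt) : Prop :=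
  ((size (part_a P s d1 d2) + size (part_d P s d1 d2))%:R
     <= (size P)%:R / 2 + 1 :> R) /\
  ((size (part_b P s d1 d2) + size (part_c P s d1 d2))%:R
     <= (size P)%:R / 2 + 1 :> R).

End Defs.

From HB Require Import structures.
From mathcomp Require Import all_boot all_order all_algebra.
From mathcomp Require Import all_classical all_reals all_analysis.
From mathcomp Require Import zify ring lra.
Import Order.TTheory GRing.Theory Num.Theory.
Local Open Scope ring_scope.
Set Implicit Arguments. Unset Strict Implicit. Unset Printing Implicit Defensive.

(* Walk along the hull clockwise and attach to each vertex y the edge
   e(y) = next y - y.  For a generic direction d, the edges leaving the points
   of P1(d) go up along d and those leaving P2(d) go down: a vertex where d
   stops increasing is a local, hence (by convexity) global, maximum of d.
   So |Pa| + |Pd| is at most the number of edges whose up/down status is the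
   same for d1 and d2, and |Pb| + |Pc| at most the number where it differs.
   The directions d2 = x d1 + d1^perp, x real, sweep the open half-turn
   clockwise from d1, and the status of e(y) flips exactly when x crosses a
   critical value crit(e(y)); at most two hull edges are parallel, so each
   critical value is shared by at most two edges.  Hence x can be chosen,
   away from the critical values of all chords (which keeps d2 generic), so
   that floor(n/2) or floor(n/2) + 1 edges change status. *)

Section CyclicSuccessor.
Variable T : eqType.
Implicit Types (s p : seq T) (x : T).

Lemma next_nth_mod s x x0 : x \in s ->
  next s x = nth x0 s ((index x s).+1 %% size s).
Proof.
move=> xs; rewrite next_nth xs; case: s xs => // y s' xs.
have : (index x (y :: s') <= size s')%N by rewrite -ltnS index_mem.
rewrite leq_eqVlt => /predU1P[->|lt_i]; first by rewrite modnn /= nth_default.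
by rewrite modn_small //= (set_nth_default x0).
Qed.

Lemma index_iter_next s x k : uniq s -> x \in s ->
  index (iter k (next s) x) s = ((index x s + k) %% size s)%N.
Proof.
move=> us xs; have s_pos : (0 < size s)%N by case: (s) xs.
elim: k => [|k IH]; first by rewrite addn0 modn_small ?index_mem.
have mem_it : iter k (next s) x \in s by elim: (k) => //= j; rewrite mem_next.
rewrite /= (next_nth_mod x) // index_uniq ?ltn_mod // IH.
by rewrite -addn1 modnDml addn1 addnS.
Qed.

Lemma iter_next_neq s x k : uniq s -> x \in s -> (0 < k < size s)%N ->
  iter k (next s) x != x.
Proof.
move=> us xs /andP[k_pos k_lt]; apply: contraTneq k_pos => /(congr1 (index^~ s)).
have i_lt : (index x s < size s)%N by rewrite index_mem.
rewrite index_iter_next // -[in RHS](modn_small i_lt).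
by move/eqP; rewrite -[X in _ == X %[mod _]]addn0 eqn_modDl mod0n modn_small // => /eqP->.
Qed.

Lemma fpath_rcons_next (g : T -> T) x p b : fpath g x (rcons p b) -> g x \in rcons p b.
Proof. by case: p => [|y p] /= /andP[/eqP-> _]; rewrite mem_head. Qed.

Lemma three_le_size s (u v w : T) : u \in s -> v \in s -> w \in s ->
  u != v -> u != w -> v != w -> (2 < size s)%N.
Proof.
move=> su sv sw uv uw vw.
apply: (@uniq_leq_size _ [:: u; v; w]) => [|y]; first by rewrite /= !inE !negb_or uv uw vw.
by rewrite !inE => /or3P[] /eqP->.
Qed.

Lemma off_edge_endpoint s y y' : uniq s -> y \in s -> y' \in s -> y != y' ->
  (2 < size s)%N -> exists2 w, w \in [:: y'; next s y'] & (w != y) && (w != next s y).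
Proof.
move=> us sy sy' yy' s3; have [ny|n'y] := eqVneq y' (next s y); last first.
  by exists y'; rewrite ?mem_head // eq_sym yy'.
exists (next s y'); first by rewrite !inE eqxx orbT.
rewrite ny (@iter_next_neq s y 2) ?s3 //=.
apply: (@iter_next_neq s (next s y) 1) => //; first by rewrite mem_next.
exact: ltnW.
Qed.

End CyclicSuccessor.

Section FoldArgmin.
Context {disp : Order.disp_t} {O : orderType disp} {T : eqType}.
Local Open Scope order_scope.

Lemma foldl_argmin (g : T -> O) x s :
  let m := foldl (fun m y => if g y < g m then y else m) x s in
  m \in x :: s /\ {in x :: s, forall y, g m <= g y}.
Proof.
elim: s x => [|z s IH] x /=; first by split=> [|y]; rewrite ?mem_head // mem_seq1 => /eqP->.
case: ifP => zx; [have [m_in m_min] := IH z | have [m_in m_min] := IH x].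
- split; first by move: m_in; rewrite !inE => /orP[->|->]; rewrite ?orbT.
  move=> y; rewrite inE => /predU1P[->|y_in]; last exact: m_min.
  exact: le_trans (m_min z (mem_head _ _)) (ltW zx).
- split; first by move: m_in; rewrite !inE => /orP[->|->]; rewrite ?orbT.
  move=> y; rewrite !inE => /or3P[/eqP->|/eqP->|y_s].
  + exact: m_min (mem_head _ _).
  + by apply: le_trans (m_min x (mem_head _ _)) _; rewrite leNgt zx.
  + by apply: m_min; rewrite inE y_s orbT.
Qed.

Lemma seq_argmin (g : T -> O) s : s != [::] ->
  exists2 m, m \in s & {in s, forall y, g m <= g y}.
Proof.
case: s => // x s _; case: (foldl_argmin g x s) => m_in m_min.
by exists (foldl (fun m y => if g y < g m then y else m) x s).
Qed.

End FoldArgmin.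

Section IncreasingArc.
Context {disp : Order.disp_t} {O : orderType disp} {T : eqType}.
Local Open Scope order_scope.
Variable f : T -> O.

Lemma fpath_increasing (g : T -> T) x p b :
  fpath g x (rcons p b) -> uniq (x :: rcons p b) ->
  {in x :: rcons p b &, injective f} ->
  {in x :: p, forall u, f u < f (g u) -> f (g (g u)) < f (g u) -> g u = b} ->
  f x < f (g x) -> {in x :: p, forall y, f y < f (g y)}.
Proof.
elim: p x => [|z p IH] x /=.
  by move=> _ _ _ _ fx y; rewrite mem_seq1 => /eqP->.
move=> /andP[/eqP gx zp] /andP[_ zu] inj peak fx.
have z'b : z != b.
  by move: zu => /andP[+ _]; apply: contraNneq => ->; rewrite mem_rcons mem_head.
have fz : f z < f (g z).
  have gz := fpath_rcons_next zp.
  have gz'z : g z != z by apply: contraTneq gz => ->; case/andP: zu.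
  rewrite ltNge le_eqVlt negb_or; apply/andP; split.
    by apply: contra gz'z => /eqP/inj -> //; rewrite !inE ?gz ?eqxx ?orbT.
  apply: contra z'b => down; apply/eqP.
  by rewrite -gx; apply: (peak x (mem_head _ _) fx); rewrite gx.
move=> y; rewrite inE => /predU1P[-> //|]; apply: IH => //.
- by move=> u v hu hv; apply: inj; rewrite inE ?hu ?hv orbT.
- by move=> u hu; apply: peak; rewrite inE hu orbT.
Qed.

Lemma arc_increasing s a b :
  uniq s -> a \in s -> b \in s -> {in s &, injective f} ->
  {in s, forall y, f a <= f y} ->
  {in s, forall u, f u < f (next s u) ->
     f (next s (next s u)) < f (next s u) -> next s u = b} ->
  {in arc s a b, forall x, f x < f (next s x)}.
Proof.
move=> us sa sb inj amin peak.
have [<-|a'b] := eqVneq a b; first by move=> x; rewrite /arc rot_index //= eqxx.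
case: (rot_to_arc us sa sb a'b) => i p1 p2 <- _ s_rot.
have c_split : rot i s = (a :: rcons p1 b) ++ p2 by rewrite s_rot cat_cons cat_rcons.
have uc : uniq ((a :: rcons p1 b) ++ p2) by rewrite -c_split rot_uniq.
have sub : {subset a :: rcons p1 b <= s}.
  by move=> y y_in; rewrite -(mem_rot i) c_split mem_cat y_in.
have sub' : {subset a :: p1 <= s}.
  move=> y y_in; apply: sub; move: y_in.
  by rewrite !inE mem_rcons inE => /orP[->|->]; rewrite ?orbT.
have pth : fpath (next s) a (rcons p1 b).
  have nexts : frel (next (rot i s)) =2 frel (next s) by move=> u v /=; rewrite next_rot.
  have := cycle_next (etrans (rot_uniq i s) us).
  by rewrite (eq_cycle nexts) c_split /= rcons_cat cat_path => /andP[].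
have u_pth : uniq (a :: rcons p1 b) by move: uc; rewrite cat_uniq => /andP[].
apply: (fpath_increasing pth u_pth (sub_in2 sub inj) (sub_in1 sub' peak)).
have na'a : next s a != a.
  by apply: contraTneq (fpath_rcons_next pth) => ->; case/andP: u_pth.
have na : next s a \in s by rewrite mem_next.
rewrite lt_neqAle amin // andbT.
by apply: contra na'a => /eqP/(inj _ _ sa na) <-.
Qed.

End IncreasingArc.

Section PlaneGeometry.
Variable R : realType.
Local Notation pt := (R * R)%type.
Implicit Types (a b d u v w x y z : pt) (s : seq pt).

Definition crossp (u v : pt) : R := u.1 * v.2 - u.2 * v.1.

Lemma dotp_subp d x y : dotp d (subp y x) = dotp d y - dotp d x.
Proof. by rewrite /dotp /subp /=; ring. Qed.

Lemma orient_crossp u v w : orient u v w = crossp (subp v u) (subp w u).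
Proof. by []. Qed.

Lemma dotp_self_gt0 d : d != (0, 0) -> 0 < dotp d d.
Proof.
case: d => d1 d2 d0; rewrite /dotp /= -[d1 * d1]expr2 -[d2 * d2]expr2.
have [d1_0|d1_0] := eqVneq d1 0.
  rewrite d1_0 expr0n /= add0r exprn_even_gt0 //=.
  by apply: contraNneq d0 => ->; rewrite d1_0.
by rewrite ltr_pwDl ?sqr_ge0 // exprn_even_gt0 //= d1_0.
Qed.

Lemma dotp_crossp_cramer d a b x :
  dotp d x * crossp a b = dotp d a * crossp x b + dotp d b * crossp a x.
Proof. by rewrite /dotp /crossp; ring. Qed.

(* In the basis (u - v, w - v), positively oriented because w is right of
   u -> v, the point y - v has positive coordinates, while d decreases along
   both basis vectors. *)
Lemma orient_peak d u v w y :
  orient u v y < 0 -> orient v w y < 0 -> orient u v w < 0 ->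
  dotp d u < dotp d v -> dotp d w < dotp d v -> dotp d y <= dotp d v.
Proof.
move=> uvy vwy uvw du dw.
have := dotp_crossp_cramer d (subp u v) (subp w v) (subp y v).
have -> : crossp (subp u v) (subp w v) = - orient u v w.
  by rewrite /orient /crossp /subp /=; ring.
have -> : crossp (subp y v) (subp w v) = - orient v w y.
  by rewrite /orient /crossp /subp /=; ring.
have -> : crossp (subp u v) (subp y v) = - orient u v y.
  by rewrite /orient /crossp /subp /=; ring.
rewrite !dotp_subp => cramer.
have : (dotp d y - dotp d v) * - orient u v w < 0 by rewrite cramer; nra.
by rewrite pmulr_llt0 ?oppr_gt0 // subr_lt0 => /ltW.
Qed.

Lemma orthogonal_edges_opposite d y n p q z w : d != (0, 0) ->
  dotp d (subp n y) = 0 -> dotp d (subp q p) = 0 ->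
  dotp d (subp z y) = 0 -> dotp d (subp w p) = 0 ->
  orient y n w < 0 -> orient p q z < 0 ->
  crossp (subp n y) d * crossp (subp q p) d < 0.
Proof.
move=> /dotp_self_gt0 dd ny qp zy wp ynw pqz.
have := dotp_crossp_cramer d (subp n y) d (subp w y).
have := dotp_crossp_cramer d (subp q p) d (subp z p).
rewrite ny qp -!orient_crossp !mul0r !add0r.
have -> : dotp d (subp z p) = - dotp d (subp w y).
  by move: zy wp; rewrite !dotp_subp; lra.
(* [t] is the offset along [d] between the lines of the two edges. *)
set t := dotp d (subp w y); set k := crossp (subp n y) d; set k' := crossp _ d.
move=> e' e.
have neg : t * k < 0 by rewrite e pmulr_rlt0.
have pos : 0 < t * k' by rewrite -oppr_lt0 -mulNr e' pmulr_rlt0.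
have t0 : 0 < t ^+ 2.
  by rewrite exprn_even_gt0 //=; apply: contraTneq neg => ->; rewrite mul0r ltxx.
rewrite -(pmulr_rlt0 _ t0) (_ : t ^+ 2 * (k * k') = (t * k) * (t * k')); last by ring.
by rewrite nmulr_rlt0.
Qed.

Definition oppp (u : pt) : pt := (- u.1, - u.2).

Lemma dotpNl d x : dotp (oppp d) x = - dotp d x.
Proof. by rewrite /dotp /=; ring. Qed.

Lemma minpt_spec d s : s != [::] ->
  minpt d s \in s /\ {in s, forall y, dotp d (minpt d s) <= dotp d y}.
Proof. by case: s => // x s _; apply: foldl_argmin. Qed.

Lemma maxpt_spec d s : s != [::] ->
  maxpt d s \in s /\ {in s, forall y, dotp d y <= dotp d (maxpt d s)}.
Proof. by case: s => // x s _; apply: (foldl_argmin (O := R^d)). Qed.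

End PlaneGeometry.

Definition edge (R : realType) (s : seq (R * R)) (y : R * R) : R * R :=
  subp (next s y) y.

Definition edge_up (R : realType) (s : seq (R * R)) (d y : R * R) : bool :=
  0 < dotp d (edge s y).

Lemma quadrant_count_le (a1 b1 a2 b2 u1 u2 : bool) :
  a1 ==> u1 -> b1 ==> ~~ u1 -> a2 ==> u2 -> b2 ==> ~~ u2 ->
  ((a1 && a2) + (b1 && b2) <= (u1 == u2))%N /\
  ((a1 && b2) + (b1 && a2) <= (u1 != u2))%N.
Proof. by case: a1 b1 a2 b2 u1 u2 => [] [] [] [] [] []. Qed.

Lemma count_add_le (T : Type) (a b c : pred T) (s : seq T) :
  (forall x, a x + b x <= c x)%N -> (count a s + count b s <= count c s)%N.
Proof. by move=> abc; elim: s => //= x s IH; have := abc x; lia. Qed.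

Section HullBoundary.
Variables (R : realType) (P s : seq (R * R)).
Hypotheses (hull : cw_boundary P s) (us : uniq s).

Lemma hull_edge_right : {in s &, forall u x, x != u -> x != next s u ->
  orient u (next s u) x < 0}.
Proof.
move=> u x su sx; case: hull => _ /(_ (index u s)).
by rewrite index_mem su (next_nth_mod (0, 0) su) nth_index //; apply.
Qed.

Lemma hull_peak_max d u : u \in s ->
  dotp d u < dotp d (next s u) -> dotp d (next s (next s u)) < dotp d (next s u) ->
  {in s, forall y, dotp d y <= dotp d (next s u)}.
Proof.
move=> su up down y sy; set v := next s u in up down *; set w := next s v in down.
have sv : v \in s by rewrite mem_next.
have sw : w \in s by rewrite mem_next.
rewrite leNgt; apply/negP => above.
have y'u : y != u by apply: contraTneq above => ->; rewrite -leNgt ltW.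
have y'v : y != v by apply: contraTneq above => ->; rewrite ltxx.
have y'w : y != w by apply: contraTneq above => ->; rewrite -leNgt ltW.
have v'u : v != u by apply: contraTneq up => ->; rewrite ltxx.
have w'v : w != v by apply: contraTneq down => ->; rewrite ltxx.
have s3 : (2 < size s)%N by apply: (three_le_size su sv sy); rewrite eq_sym.
have w'u : w != u by apply: (@iter_next_neq _ s u 2); rewrite ?s3.
have := orient_peak (hull_edge_right su sy y'u y'v) (hull_edge_right sv sy y'v y'w)
  (hull_edge_right su sw w'u w'v) up down.
by rewrite leNgt above.
Qed.

Lemma hull_orthogonal_edges_opposite d y y' : d != (0, 0) -> (2 < size s)%N ->
  y \in s -> y' \in s -> y != y' ->
  dotp d (edge s y) = 0 -> dotp d (edge s y') = 0 ->
  crossp (edge s y) d * crossp (edge s y') d < 0.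
Proof.
move=> d0 s3 sy sy' yy' ey ey'.
have on_edge_line x w : dotp d (edge s x) = 0 -> w \in [:: x; next s x] ->
    dotp d (subp w x) = 0.
  by move=> ex; rewrite !inE => /orP[] /eqP-> //; rewrite dotp_subp subrr.
have in_s x w : x \in s -> w \in [:: x; next s x] -> w \in s.
  by move=> sx; rewrite !inE => /orP[] /eqP->; rewrite ?mem_next.
have [w w_in /andP[wy wny]] := off_edge_endpoint us sy sy' yy' s3.
have y'y : y' != y by rewrite eq_sym.
have [z z_in /andP[zy' zny']] := off_edge_endpoint us sy' sy y'y s3.
apply: (orthogonal_edges_opposite d0 ey ey' (on_edge_line _ _ ey z_in)
  (on_edge_line _ _ ey' w_in)).
- exact: hull_edge_right sy (in_s _ _ sy' w_in) wy wny.
- exact: hull_edge_right sy' (in_s _ _ sy z_in) zy' zny'.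
Qed.

Lemma count_orthogonal_edges_le2 d : d != (0, 0) ->
  (count (fun y => dotp d (edge s y) == 0%R) s <= 2)%N.
Proof.
move=> d0; rewrite leqNgt -size_filter; apply/negP.
have : uniq [seq y <- s | dotp d (edge s y) == 0] by exact: filter_uniq.
have E_sub y : y \in [seq y <- s | dotp d (edge s y) == 0] ->
    y \in s /\ dotp d (edge s y) = 0.
  by rewrite mem_filter => /andP[/eqP].
case: [seq y <- s | _] E_sub => [|y1 [|y2 [|y3 E]]] //= E_sub.
rewrite !inE !negb_or => /and4P[/and3P[y12 y13 _] /andP[y23 _] _ _] _.
have [s1 e1] := E_sub y1 (mem_head _ _).
have [s2 e2] : y2 \in s /\ dotp d (edge s y2) = 0.
  by apply: E_sub; rewrite !inE eqxx orbT.
have [s3 e3] : y3 \in s /\ dotp d (edge s y3) = 0.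
  by apply: E_sub; rewrite !inE eqxx !orbT.
have size3 : (2 < size s)%N by apply: three_le_size s1 s2 s3 _ _ _.
have := hull_orthogonal_edges_opposite d0 size3 s1 s2 y12 e1 e2.
have := hull_orthogonal_edges_opposite d0 size3 s1 s3 y13 e1 e3.
have := hull_orthogonal_edges_opposite d0 size3 s2 s3 y23 e2 e3.
set k1 := crossp (edge s y1) d; set k2 := crossp (edge s y2) d.
set k3 := crossp (edge s y3) d => k23 k13 k12.
have : 0 < (k1 * k2) * (k1 * k3) by rewrite nmulr_rgt0.
rewrite (_ : (k1 * k2) * (k1 * k3) = k1 ^+ 2 * (k2 * k3)); last by ring.
by rewrite ltNge mulr_ge0_le0 ?sqr_ge0 ?ltW.
Qed.

Lemma generic_dotp_inj d : generic_dir P d -> {in s &, injective (dotp d)}.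
Proof.
move=> [_ gd] x y; rewrite !(perm_mem hull.1) => Px Py e.
apply/eqP/negPn/negP => xy; have := gd _ _ Px Py xy.
by rewrite dotp_subp e subrr eqxx.
Qed.

Lemma arc_edges_up d a b : {in s &, injective (dotp d)} -> a \in s -> b \in s ->
  {in s, forall y, dotp d a <= dotp d y <= dotp d b} ->
  {in arc s a b, forall x, 0 < dotp d (edge s x)}.
Proof.
move=> inj sa sb bnd x x_in; rewrite dotp_subp subr_gt0.
apply: (arc_increasing us sa sb inj _ _ x_in); first by move=> y /bnd /andP[].
move=> u su up down; have sn : next s u \in s by rewrite mem_next.
apply: inj => //; apply/le_anti; rewrite (hull_peak_max su up down sb).
by have /andP[_ ->] := bnd _ sn.
Qed.

Lemma P1_edges_up d : generic_dir P d -> {in P1 s d, forall x, 0 < dotp d (edge s x)}.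
Proof.
move=> gd; have [->|s0] := eqVneq s [::]; first by [].
have [smin minP] := minpt_spec d s0; have [smax maxP] := maxpt_spec d s0.
apply: arc_edges_up (generic_dotp_inj gd) smin smax _ => y sy.
by rewrite minP ?maxP.
Qed.

Lemma P2_edges_down d : generic_dir P d -> {in P2 s d, forall x, dotp d (edge s x) < 0}.
Proof.
move=> gd x; have [->|s0] := eqVneq s [::]; first by [].
have [smin minP] := minpt_spec d s0; have [smax maxP] := maxpt_spec d s0.
move=> x_in; rewrite -oppr_gt0 -dotpNl.
apply: (arc_edges_up _ smax smin _ x_in).
  by move=> u v su sv; rewrite !dotpNl => /oppr_inj; apply: generic_dotp_inj.
by move=> y sy; rewrite !dotpNl !lerN2 maxP ?minP.
Qed.

Lemma partition_le_agreements d1 d2 : generic_dir P d1 -> generic_dir P d2 ->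
  (size (part_a P s d1 d2) + size (part_d P s d1 d2) <=
     count (fun y => edge_up s d1 y == edge_up s d2 y) s)%N /\
  (size (part_b P s d1 d2) + size (part_c P s d1 d2) <=
     count (fun y => edge_up s d1 y != edge_up s d2 y) s)%N.
Proof.
move=> g1 g2.
have up d : generic_dir P d -> forall x, (x \in P1 s d) ==> edge_up s d x.
  by move=> gd x; apply/implyP => /(P1_edges_up gd).
have down d : generic_dir P d -> forall x, (x \in P2 s d) ==> ~~ edge_up s d x.
  by move=> gd x; apply/implyP => /(P2_edges_down gd)/ltW; rewrite /edge_up -leNgt.
rewrite /part_a /part_b /part_c /part_d !size_filter -!(permP hull.1).
have quadrant x := quadrant_count_le (up _ g1 x) (down _ g1 x) (up _ g2 x) (down _ g2 x).
by split; apply: count_add_le => x; case: (quadrant x).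
Qed.

End HullBoundary.

Section Threshold.
Variable R : realFieldType.
Implicit Types (rs B : seq R) (v x : R).

Lemma exists_gap_below B v : exists2 x, x \notin B & {in B, forall r, (x < r) = (v <= r)}.
Proof.
have [m mv m_max] : exists2 m, m < v & {in B, forall r, r < v -> r <= m}.
  have [L0|L0] := eqVneq [seq r <- B | r < v] [::].
    exists (v - 1) => [|r rB rv]; first by lra.
    suff : r \in [::] by [].
    by rewrite -L0 mem_filter rv.
  have [m] := seq_argmin (O := R^d) id L0; rewrite mem_filter => /andP[mv _] m_max.
  by exists m => // r rB rv; apply: m_max; rewrite mem_filter rv.
exists ((m + v) / 2) => [|r rB].
  apply/negP => xB; have := m_max _ xB; lra.
have [vr|rv] := leP v r; first by apply/idP; lra.
by apply/negbTE; rewrite -leNgt; have := m_max _ rB rv; lra.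
Qed.

Lemma exists_threshold rs B K : (0 < K <= size rs)%N -> {subset rs <= B} ->
  (forall v, count (pred1 v) rs <= 2)%N ->
  exists2 x, x \notin B & (K <= count (fun r => (x < r)%R) rs <= K.+1)%N.
Proof.
move=> /andP[K_pos K_le] rsB mult.
pose c v := count (fun r => v <= r) rs.
pose V := [seq v <- rs | (K <= c v)%N].
have V0 : V != [::].
  have rs0 : rs != [::] by apply: contraTneq K_le => ->; rewrite -ltnNge.
  have [v0 v0_rs v0_min] := seq_argmin id rs0.
  rewrite -has_filter; apply/hasP; exists v0 => //.
  by rewrite /c (eq_in_count (a2 := predT)) ?count_predT // => r /v0_min.
have [v] := seq_argmin (O := R^d) id V0; rewrite mem_filter => /andP[Kv v_rs].
move=> v_max; have {}v_max : {in V, forall w, w <= v} := v_max.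
have lt_K : (count (fun r => (v < r)%R) rs < K)%N.
  rewrite ltnNge; apply/negP => Kgt.
  have W0 : [seq r <- rs | v < r] != [::].
    by rewrite -has_filter has_count; exact: leq_trans K_pos Kgt.
  have [z] := seq_argmin id W0; rewrite mem_filter => /andP[vz z_rs] z_min.
  have cz : c z = count (fun r => v < r) rs.
    apply: eq_in_count => r r_rs; apply/idP/idP => [/(lt_le_trans vz)//|vr].
    by apply: z_min; rewrite mem_filter vr.
  have := v_max z; rewrite mem_filter z_rs cz Kgt => /(_ isT).
  by rewrite leNgt vz.
have split_c : c v = (count (fun r => (v < r)%R) rs + count (pred1 v) rs)%N.
  rewrite /c; elim: (rs) => //= r l ->; rewrite le_eqVlt eq_sym.
  by case: (eqVneq r v) => [->|_]; rewrite ?ltxx /= add0n; [rewrite addnCA | rewrite addnA].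
have [x xB x_gap] := exists_gap_below B v.
exists x => //; rewrite (eq_in_count (a2 := fun r => v <= r)); last by move=> r /rsB /x_gap.
move: split_c Kv (mult v); rewrite /c => -> Kv m2.
by rewrite Kv /= -ltnS -addSn -addn2 leq_add.
Qed.

End Threshold.

Section Turn.
Variable R : realType.
Implicit Types (d w : R * R) (x : R).

(* [turn x d] is [x d] plus [d] rotated clockwise by a right angle; as [x]
   decreases from [+oo] to [-oo] it sweeps the open half-turn clockwise from
   [d]. *)
Definition turn x d : R * R := (x * d.1 + d.2, x * d.2 - d.1).

Definition crit d w : R := - crossp w d / dotp d w.

Lemma dotp_turn x d w : dotp (turn x d) w = x * dotp d w + crossp w d.
Proof. by rewrite /dotp /crossp /=; ring. Qed.

Lemma dotp_turnE x d w : dotp d w != 0 ->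
  dotp (turn x d) w = dotp d w * (x - crit d w).
Proof. by move=> dw0; rewrite dotp_turn /crit; field. Qed.

Lemma turn_neq0 x d : d != (0, 0) -> turn x d != (0, 0).
Proof.
case: d => a b d0; rewrite /turn /=; apply: contraNneq d0 => -[e1 e2].
have sq_pos : x ^+ 2 + 1 != 0 by rewrite lt0r_neq0 // ltr_wpDl ?sqr_ge0.
have ea : (x ^+ 2 + 1) * a = 0.
  rewrite (_ : _ * a = x * (x * a + b) - (x * b - a)); last by ring.
  by rewrite e1 e2 mulr0 subr0.
have eb : (x ^+ 2 + 1) * b = 0.
  rewrite (_ : _ * b = (x * a + b) + x * (x * b - a)); last by ring.
  by rewrite e1 e2 mulr0 addr0.
move/eqP: eb; move/eqP: ea; rewrite !mulf_eq0 (negbTE sq_pos) /=.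
by move=> /eqP-> /eqP->.
Qed.

Lemma turn_cw_rotation x d : cw_rotation_le_pi d (turn x d).
Proof.
set k := Num.sqrt (x ^+ 2 + 1).
have k2 : k ^+ 2 = x ^+ 2 + 1 by rewrite sqr_sqrtr // addr_ge0 // sqr_ge0.
have k_pos : 0 < k by rewrite sqrtr_gt0 ltr_wpDl ?sqr_ge0.
set c := x / k.
have kc : k * c = x by rewrite /c mulrCA divff ?mulr1 // gt_eqF.
have c_bnd : -1 <= c <= 1.
  have : c ^+ 2 <= 1.
    have : k ^+ 2 * c ^+ 2 = x ^+ 2 by rewrite -exprMn kc.
    have : 0 <= c ^+ 2 by rewrite sqr_ge0.
    nra.
  by move=> h; apply/andP; split; nra.
have ks : k * Num.sqrt (1 - c ^+ 2) = 1.
  have -> : 1 - c ^+ 2 = k^-1 ^+ 2.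
    rewrite /c exprMn exprVn k2; field.
    by rewrite lt0r_neq0 // ltr_wpDl ?sqr_ge0.
  by rewrite sqrtr_sqr ger0_norm ?invr_ge0 ?ltW // divff // gt_eqF.
exists (acos c); split; first by rewrite acos_ge0 ?acos_lepi.
exists k; split => //.
rewrite sin_acos // acosK; last by rewrite in_itv /=.
congr pair.
  have -> : k * (d.1 * c + d.2 * Num.sqrt (1 - c ^+ 2)) =
    d.1 * (k * c) + d.2 * (k * Num.sqrt (1 - c ^+ 2)) by ring.
  by rewrite kc ks; ring.
have -> : k * (- d.1 * Num.sqrt (1 - c ^+ 2) + d.2 * c) =
  - d.1 * (k * Num.sqrt (1 - c ^+ 2)) + d.2 * (k * c) by ring.
by rewrite kc ks; ring.
Qed.

Lemma cw_rotation_refl d : cw_rotation_le_pi d d.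
Proof.
exists 0; split; first by rewrite lexx pi_ge0.
by exists 1; split; rewrite // cos0 sin0; case: d => a b /=; congr pair; ring.
Qed.

Lemma turn_sign_flip x d w : dotp d w != 0 -> dotp (turn x d) w != 0 ->
  ((0 < dotp d w) != (0 < dotp (turn x d) w)) = (x < crit d w).
Proof.
move=> dw0; rewrite dotp_turnE // mulf_eq0 (negbTE dw0) /= subr_eq0 => x_crit.
have [dw_pos|dw_neg] := ltP 0 (dotp d w).
  by rewrite pmulr_rgt0 // subr_gt0 -leNgt le_eqVlt (negbTE x_crit).
have {}dw_neg : dotp d w < 0 by rewrite lt_neqAle dw0 dw_neg.
by rewrite nmulr_rgt0 // subr_lt0 /= negbK.
Qed.

End Turn.

Lemma natr_le_half_add1 (R : realFieldType) (m n : nat) :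
  (2 * m <= n + 2)%N -> m%:R <= n%:R / 2 + 1 :> R.
Proof. by rewrite -(ler_nat R) natrM natrD => h; lra. Qed.

Section Balancing.
Variables (R : realType) (P s : seq (R * R)) (d1 : R * R).
Hypotheses (hull : cw_boundary P s) (us : uniq s) (g1 : generic_dir P d1).

Definition edge_crits := [seq crit d1 (edge s y) | y <- s].
Definition chord_crits := [seq crit d1 (subp q p) | p <- s, q <- s].

Let sP := perm_size hull.1.

Lemma generic_dotp_edge_neq0 d : (1 < size s)%N -> generic_dir P d ->
  {in s, forall y, dotp d (edge s y) != 0}.
Proof.
move=> s2 [_ gd] y sy; apply: gd; rewrite -?(perm_mem hull.1) ?mem_next //.
by rewrite eq_sym (@iter_next_neq _ s y 1).
Qed.

Lemma generic_turn x : x \notin chord_crits -> generic_dir P (turn x d1).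
Proof.
move=> x_crit; split; first exact: turn_neq0 g1.1.
move=> p q Pp Pq pq; rewrite dotp_turnE ?mulf_neq0 ?g1.2 // subr_eq0.
by apply: contraNneq x_crit => ->; apply: allpairs_f; rewrite (perm_mem hull.1).
Qed.

Lemma count_edge_crits_le2 v : (1 < size s)%N ->
  (count (pred1 v) edge_crits <= 2)%N.
Proof.
move=> s2; rewrite count_map.
rewrite (eq_in_count (a2 := fun y => dotp (turn v d1) (edge s y) == 0)).
  exact: (count_orthogonal_edges_le2 hull us (turn_neq0 v g1.1)).
move=> y sy /=; rewrite dotp_turnE ?generic_dotp_edge_neq0 //.
by rewrite mulf_eq0 (negbTE (generic_dotp_edge_neq0 s2 g1 sy)) subr_eq0 eq_sym.
Qed.

Lemma count_disagreements x : (1 < size s)%N -> generic_dir P (turn x d1) ->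
  count (fun y => edge_up s d1 y != edge_up s (turn x d1) y) s =
  count (fun r => (x < r)%R) edge_crits.
Proof.
move=> s2 g2; rewrite count_map; apply: eq_in_count => y sy.
by rewrite /edge_up turn_sign_flip ?(generic_dotp_edge_neq0 s2).
Qed.

Lemma balanced_of_few_disagreements d2 : generic_dir P d2 ->
  ((size P)./2 <= count (fun y => edge_up s d1 y != edge_up s d2 y) s
     <= (size P)./2.+1)%N ->
  balanced P s d1 d2.
Proof.
move=> g2 dis; have [ad bc] := partition_le_agreements hull us g1 g2.
have total : (count (fun y => edge_up s d1 y == edge_up s d2 y) s +
    count (fun y => edge_up s d1 y != edge_up s d2 y) s = size P)%N.
  by rewrite -sP -(count_predC (fun y => edge_up s d1 y == edge_up s d2 y)).
by rewrite /balanced; split; apply: natr_le_half_add1; lia.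
Qed.

Lemma balanced_small d2 : (size P <= 2)%N -> generic_dir P d2 -> balanced P s d1 d2.
Proof.
move=> small g2; have [ad bc] := partition_le_agreements hull us g1 g2.
have := leq_trans ad (count_size _ _); have := leq_trans bc (count_size _ _).
(* [set] merges occurrences of [size P] that differ by a convertible element
   type, which [lia] would otherwise take for distinct atoms. *)
rewrite sP /balanced => bc' ad'; set n := size P in small bc' ad' *.
by split; apply: natr_le_half_add1; lia.
Qed.

End Balancing.

Unset Implicit Arguments. Set Strict Implicit.

Theorem lemma5 (R : realType) (P s : seq (R * R)) (d1 : R * R) :
  convex_point_set P -> cw_boundary P s -> generic_dir P d1 ->
  exists d2 : R * R, generic_dir P d2 /\ cw_rotation_le_pi d1 d2 /\
    balanced P s d1 d2.
Proof.
move=> [uP _] hull g1; have us : uniq s by rewrite (perm_uniq hull.1).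
have sP := perm_size hull.1.
have [small|large] := leqP (size P) 2.
  by exists d1; split=> //; split; [exact: cw_rotation_refl | exact: balanced_small].
have s2 : (1 < size s)%N by rewrite sP ltnW.
have K_range : (0 < (size P)./2 <= size (edge_crits s d1))%N.
  by rewrite size_map sP half_gt0 ltnW // leq_half_double -addnn -addnS leq_addr.
have edges_chords : {subset edge_crits s d1 <= chord_crits s d1}.
  by move=> r /mapP[y sy ->]; apply: allpairs_f; rewrite ?mem_next.
have [x x_chords x_count] := exists_threshold K_range edges_chords
  (fun v => count_edge_crits_le2 hull us g1 v s2).
have g2 := generic_turn hull g1 x_chords.
exists (turn x d1); split=> //; split; first exact: turn_cw_rotation.
by apply: balanced_of_few_disagreements; rewrite // (count_disagreements hull us g1 s2 g2).
Qed.
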